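(* $V$ is a nuclear space.
   Context: Let $N\ge2$, $\mathbf A$ an $N\times N$ zero-one aperiodic matrix, $\Sigma_{\mathbf A}^+=\{\omega\in\{1,\dots,N\}^{\mathbb N\cup\{0\}}:\mathbf A(\omega_m\omega_{m+1})=1\ \forall m\}$. $\mathrm{var}_m(\phi)=\sup\{|\phi(\omega)-\phi(\omega')|:\omega_k=\omega'_k,\ 0\le k\le m-1\}$; $V=\{\phi:\Sigma_{\mathbf A}^+\to\mathbb C:\mathrm{var}_m(\phi)^{1/m}\to0\}$ with the locally convex topology generated by the norms $\|\phi\|_\theta=\|\phi\|_\infty+[\phi]_\theta$, $\theta\in(0,1)$, $[\phi]_\theta$ the Lipschitz constant w.r.t. $d_\theta(\omega,\omega')=\theta^{\min\{m:\omega_m\ne\omega'_m\}}$. A bounded operator $T:E\to F$ between Banach spaces is nuclear if $Tx=\sum_n\lambda_n\langle x,x_n'\rangle y_n$ with $(\lambda_n)$ summable, $(x'_n)\subset E'$ and $(y_n)\subset F$ bounded. A locally convex Hausdorff space $X$ is nuclear if for every continuous seminorm $p$ there is a continuous seminorm $q\ge p$ such that the natural map $\widehat X_q\to\widehat X_p$ is nuclear, where $\widehat X_p$ is the completion of $X/\ker p$ w.r.t. $p$. *)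

From HB Require Import structures.
From mathcomp Require Import all_boot all_order all_algebra.
From mathcomp Require Import boolp classical_sets reals.
From mathcomp Require Import complex.
Set Implicit Arguments. Unset Strict Implicit. Unset Printing Implicit Defensive.
Import Order.TTheory GRing.Theory Num.Theory.
Local Open Scope ring_scope.
Local Open Scope classical_set_scope.

(* Alphabet {1,...,N} is represented by 'I_N (shift by one); N = n.+2 >= 2. *)

Definition zero_one (N : nat) (A : 'M[int]_N) : Prop :=
  forall i j, A i j = 0 \/ A i j = 1.

Definition aperiodic (n : nat) (A : 'M[int]_(n.+2)) : Prop :=
  exists k : nat, forall i j, 0 < (A ^+ k) i j.

Definition Sigma (N : nat) (A : 'M[int]_N) :=
  {w : nat -> 'I_N | forall m, A (w m) (w m.+1) = 1}.


Definition cabs (R : realType) (z : R[i]) : R :=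
  Num.sqrt (complex.Re z ^+ 2 + complex.Im z ^+ 2).

Section Space.
Variables (R : realType) (N : nat) (A : 'M[int]_N).
Local Notation S := (Sigma A).
Local Notation C := (R[i]).

Definition var_le (phi : S -> C) (m : nat) (c : R) : Prop :=
  forall w w' : S, (forall k, (k < m)%N -> proj1_sig w k = proj1_sig w' k) ->
    cabs (phi w - phi w') <= c.

(* phi \in V  :<=>  var_m(phi)^(1/m) --> 0, i.e.
   for every eps > 0, eventually var_m(phi) <= eps^m *)
Definition inV (phi : S -> C) : Prop :=
  forall eps : R, 0 < eps ->
    exists M : nat, forall m, (M <= m)%N -> var_le phi m (eps ^+ m).

(* min{m : w_m <> w'_m} (0 if w = w'; only used for w <> w') *)
Definition firstdiff (w w' : S) : nat :=
  match pselect (exists m, proj1_sig w m != proj1_sig w' m) with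
  | left H => ex_minn H
  | right _ => 0%N
  end.

Definition dtheta (theta : R) (w w' : S) : R := theta ^+ firstdiff w w'.

Definition supnorm (phi : S -> C) : R :=
  sup [set cabs (phi w) | w in [set: S]].

Definition lipconst (theta : R) (phi : S -> C) : R :=
  sup [set r | exists w w' : S, w <> w' /\
                 r = cabs (phi w - phi w') / dtheta theta w w'].

Definition normtheta (theta : R) (phi : S -> C) : R :=
  supnorm phi + lipconst theta phi.

Definition seminormV (p : (S -> C) -> R) : Prop :=
  (forall phi, inV phi -> 0 <= p phi) /\
  (forall phi psi, inV phi -> inV psi -> p (phi \+ psi) <= p phi + p psi) /\
  (forall (c : C) phi, inV phi -> p (fun w => c * phi w) = cabs c * p phi).

(* continuity w.r.t. the locally convex topology generated by the norms
   ||.||_theta, theta in (0,1): domination by finitely many of them *)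
Definition continuous_seminorm (p : (S -> C) -> R) : Prop :=
  seminormV p /\
  exists (thetas : seq R) (K : R),
    all (fun t => (0 < t) && (t < 1)) thetas /\
    forall phi, inV phi -> p phi <= K * \sum_(t <- thetas) normtheta t phi.

(* The natural map from hat{V}_q to hat{V}_p is nuclear.
   Unfolded: there are (lambda_n) absolutely summable, functionals x'_n
   (linear on V, |x'_n phi| <= B q(phi), so they extend to a bounded sequence
   in the dual of hat{V}_q), and a bounded sequence y_n in hat{V}_p, each
   y_n represented by a p-Cauchy sequence (y n k)_k of elements of V, with
     iota(phi) = sum_n lambda_n <phi, x'_n> y_n  in hat{V}_p  for phi in V
   (which determines the map on hat{V}_q by density and continuity). *)
Definition nuclear_natural_map (q p : (S -> C) -> R) : Prop :=
  exists (lam : nat -> C) (x' : nat -> (S -> C) -> C)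
         (y : nat -> nat -> S -> C),
    (exists L : R, forall M, \sum_(i < M) cabs (lam i) <= L) /\
    (forall i, (forall phi psi, inV phi -> inV psi ->
                  x' i (phi \+ psi) = x' i phi + x' i psi) /\
               (forall (c : C) phi, inV phi ->
                  x' i (fun w => c * phi w) = c * x' i phi)) /\
    (exists B : R, forall i phi, inV phi -> cabs (x' i phi) <= B * q phi) /\
    (forall i k, inV (y i k)) /\
    (forall i (eps : R), 0 < eps -> exists K, forall k l, (K <= k)%N -> (K <= l)%N ->
        p (y i k \- y i l) <= eps) /\
    (exists B' : R, forall i, exists K, forall k, (K <= k)%N -> p (y i k) <= B') /\
    (forall phi, inV phi -> forall eps : R, 0 < eps ->
       exists M0, forall M, (M0 <= M)%N -> exists K, forall k, (K <= k)%N ->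
         p (fun w => phi w - \sum_(i < M) lam i * x' i phi * y i k w) <= eps).

Definition V_nuclear : Prop :=
  forall p, continuous_seminorm p ->
    exists q, continuous_seminorm q /\ (forall phi, inV phi -> p phi <= q phi) /\
      nuclear_natural_map q p.

End Space.

From HB Require Import structures.
From mathcomp Require Import all_boot all_order all_algebra.
From mathcomp Require Import boolp classical_sets reals complex.
From mathcomp Require Import ring lra.
Set Implicit Arguments. Unset Strict Implicit. Unset Printing Implicit Defensive.
Import Order.TTheory GRing.Theory Num.Theory.
Local Open Scope ring_scope.
Local Open Scope classical_set_scope.

(* Let p be a continuous seminorm, p <= K * sum_(t in T) ||.||_t with T a finite
   set of parameters in (0,1).  Put theta = min (T u {1/2}), theta' =
   theta / (2N) and q = p + ||.||_theta'.  Every phi in V is the telescoping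
   sum over cylinders
       phi = sum_m sum_(|s| = m) D_m(s, phi) 1_[s],
   where D_m(s, phi) = phi(r_s) - phi(r_s') compares the values of phi at chosen
   points r_s of the cylinder [s] and r_s' of its parent cylinder, so that
   |D_m(s, phi)| <= ||phi||_theta' theta'^(m-1).  Writing each term as
   lam * x'(phi) * y with lam = (theta'/theta)^m, x' = D_m(s, .) / theta'^m and
   y = theta^m 1_[s] gives a nuclear representation: the N^m coefficients of
   level m add up to at most 2^-m, the functionals x' are bounded by q/theta'
   and p(y) is bounded since ||y||_t <= 2 for t >= theta.  Convergence in p
   follows since phi minus its m-th cylinder approximation is small in every
   ||.||_t, t in T, by the super-exponential decay of var_m(phi). *)

Section ComplexModulus.
Variable R : realType.
Implicit Types x y : R[i].

Lemma cabsE x : cabs x = Normc.normc x. Proof. by case: x. Qed.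
Lemma cabsD x y : cabs (x + y) <= cabs x + cabs y.
Proof. rewrite !cabsE; exact: le_normcD. Qed.
Lemma cabsM x y : cabs (x * y) = cabs x * cabs y.
Proof. rewrite !cabsE; exact: Normc.normcM. Qed.
Lemma cabsN x : cabs (- x) = cabs x.
Proof. rewrite !cabsE; exact: normcN. Qed.
Lemma cabsB x y : cabs (x - y) <= cabs x + cabs y.
Proof. by rewrite -(cabsN y) cabsD. Qed.
Lemma cabsV x : cabs x^-1 = (cabs x)^-1.
Proof. rewrite !cabsE; exact: Normc.normcV. Qed.
Lemma cabs_ge0 x : 0 <= cabs x.
Proof. case: x => a b; exact: sqrtr_ge0. Qed.
Lemma cabs0 : cabs (0 : R[i]) = 0.
Proof. by rewrite cabsE Normc.normc0. Qed.
Lemma cabs1 : cabs (1 : R[i]) = 1.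
Proof. by rewrite cabsE Normc.normc1. Qed.
Lemma cabs_gt0 x : x != 0 -> 0 < cabs x.
Proof.
move=> x0; rewrite lt_def cabs_ge0 andbT; apply: contra x0.
by rewrite cabsE => /eqP/Normc.eq0_normc ->.
Qed.

Lemma cabsR (r : R) : cabs r%:C%C = `|r|.
Proof. by rewrite /cabs /= expr0n /= addr0 sqrtr_sqr. Qed.
Lemma cabs_divR x (r : R) : 0 < r -> cabs (x / r%:C%C) = cabs x / r.
Proof. by move=> r0; rewrite cabsM cabsV cabsR ger0_norm // ltW. Qed.
End ComplexModulus.

Section SupBounds.
Variable R : realType.
Implicit Types E : set R.

(* [sup] is 0 on sets without supremum, hence these two sign-aware bounds *)
Lemma sup_le_nonneg E c : 0 <= c -> (forall x, E x -> x <= c) -> sup E <= c.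
Proof.
move=> c0 Ec; have [ne|ne] := pselect (E !=set0); first by apply: ge_sup => // x /Ec.
by rewrite sup_out // => -[].
Qed.

Lemma sup_ge0_of E : (forall x, E x -> 0 <= x) -> 0 <= sup E.
Proof.
move=> E0; have [[[x Ex] ub]|ns] := pselect (has_sup E); last by rewrite sup_out.
exact: le_trans (E0 x Ex) (ub_le_sup ub Ex).
Qed.
End SupBounds.

Section PowerBounds.
Variable R : realType.

(* used to absorb constants into the rate of super-exponential decay *)
Lemma scaled_pow_le (e k : R) m : 0 <= e -> 1 <= k -> (0 < m)%N ->
  k * (e / k) ^+ m <= e ^+ m.
Proof.
move=> e0 k1; case: m => // m _.
have k0 : 0 < k by apply: lt_le_trans k1; exact: ltr01.
have ek : e / k <= e by rewrite ler_pdivrMr // ler_peMr.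
rewrite exprS mulrA (mulrC k) divfK ?gt_eqF // exprS ler_wpM2l //.
by apply: lerXn2r => //; rewrite nnegrE ?divr_ge0 // ltW.
Qed.

Lemma pow_le_base (x : R) k : 0 <= x -> x <= 1 -> (0 < k)%N -> x ^+ k <= x.
Proof. by move=> x0 x1 k1; have := ler_wiXn2l x0 x1 k1; rewrite expr1. Qed.

Lemma geometric_half_le2 M : \sum_(m < M) (1 / 2 : R) ^+ m <= 2.
Proof.
suff : \sum_(m < M) (1 / 2 : R) ^+ m + 2 * (1 / 2) ^+ M = 2.
  have : 0 <= (1 / 2 : R) ^+ M by rewrite exprn_ge0 // divr_ge0.
  set x := (1 / 2 : R) ^+ M; set s := \sum_(m < M) _; lra.
elim: M => [|M IH]; first by rewrite big_ord0 expr0; lra.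
by rewrite big_ord_recr /= exprS; move: IH; set x := (1 / 2 : R) ^+ M; lra.
Qed.

Lemma half_pow_small (d : R) : 0 < d -> exists b, (1 / 2 : R) ^+ b <= d.
Proof.
move=> d0; set k := Num.bound d^-1.
have hk : d^-1 < k%:R by apply: archi_boundP; rewrite invr_ge0 ltW.
have k0 : 0 < (k%:R : R) by apply: le_lt_trans hk; rewrite invr_ge0 ltW.
exists k; apply: le_trans (_ : k%:R^-1 <= _).
  rewrite expr_div_n expr1n div1r -natrX lef_pV2 ?posrE ?ltr0n ?expn_gt0 //.
  by rewrite ler_nat ltnW // ltn_expl.
by rewrite -[d]invrK lef_pV2 ?posrE ?invr_gt0 // ltW.
Qed.
End PowerBounds.

(* Weighted suprema sup_(i | P i) |L_i f| / w_i of a family of linear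
   functionals; both ||.||_infty and [.]_theta are of this form, so this
   section provides their seminorm properties at once. *)
Section WeightedSup.
Variables (R : realType) (T I : Type) (P : I -> Prop)
  (L : I -> (T -> R[i]) -> R[i]) (wt : I -> R).
Hypothesis wt_gt0 : forall i, 0 < wt i.
Hypothesis LD : forall i f g, L i (f \+ g) = L i f + L i g.
Hypothesis LZ : forall i (c : R[i]) f, L i (fun w => c * f w) = c * L i f.

Definition wsup_set (f : T -> R[i]) : set R :=
  [set r | exists i, P i /\ r = cabs (L i f) / wt i].
Definition wsup (f : T -> R[i]) : R := sup (wsup_set f).

Lemma wsup_ge0 f : 0 <= wsup f.
Proof. by apply: sup_ge0_of => _ [i [_ ->]]; rewrite divr_ge0 ?cabs_ge0 ?ltW. Qed.

Lemma wsup_bound f i : has_ubound (wsup_set f) -> P i -> cabs (L i f) <= wsup f * wt i.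
Proof. by move=> ub Pi; rewrite -ler_pdivrMr //; apply: ub_le_sup => //; exists i. Qed.

Lemma wsupD f g : has_ubound (wsup_set f) -> has_ubound (wsup_set g) ->
  wsup (f \+ g) <= wsup f + wsup g.
Proof.
move=> uf ug; apply: sup_le_nonneg; first by rewrite addr_ge0 ?wsup_ge0.
move=> _ [i [Pi ->]]; rewrite ler_pdivrMr // LD mulrDl.
by apply: le_trans (cabsD _ _) _; apply: lerD; exact: wsup_bound.
Qed.

Lemma wsup_setZ_ub (c : R[i]) f : has_ubound (wsup_set f) ->
  ubound (wsup_set (fun w => c * f w)) (cabs c * wsup f).
Proof.
move=> uf _ [i [Pi ->]]; rewrite ler_pdivrMr // LZ cabsM -mulrA.
by apply: ler_wpM2l; [exact: cabs_ge0 | exact: wsup_bound].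
Qed.

Lemma wsupZ_le (c : R[i]) f : has_ubound (wsup_set f) ->
  wsup (fun w => c * f w) <= cabs c * wsup f.
Proof.
move=> uf; apply: sup_le_nonneg; first by rewrite mulr_ge0 ?cabs_ge0 ?wsup_ge0.
exact: wsup_setZ_ub.
Qed.

(* homogeneity follows from the upper bound applied to c and to c^-1 *)
Lemma wsupZ (c : R[i]) f : has_ubound (wsup_set f) ->
  wsup (fun w => c * f w) = cabs c * wsup f.
Proof.
move=> uf; apply/eqP; rewrite eq_le wsupZ_le //=.
have [->|c0] := eqVneq c 0; first by rewrite cabs0 mul0r wsup_ge0.
have := wsupZ_le c^-1 (ex_intro _ _ (wsup_setZ_ub (c := c) uf)).
have -> : (fun w => c^-1 * (c * f w)) = f by apply: funext => w; rewrite mulKf.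
by rewrite cabsV ler_pdivlMl ?cabs_gt0.
Qed.
End WeightedSup.

Section Shift.
Variables (R : realType) (n : nat) (A : 'M[int]_(n.+2)).
Local Notation N := n.+2.
Local Notation S := (Sigma A).
Local Notation C := (R[i]).
Implicit Types (w : S) (phi psi : S -> C).

Definition word m w : seq 'I_N := [seq sval w k | k <- iota 0 m].

Lemma size_word m w : size (word m w) = m.
Proof. by rewrite size_map size_iota. Qed.

Lemma wordP m w w' : word m w = word m w' <->
  (forall k, (k < m)%N -> sval w k = sval w' k).
Proof.
split => [/eq_in_map E k km | E]; first by apply: E; rewrite mem_iota.
by apply/eq_in_map => k; rewrite mem_iota => /andP[_ km]; apply: E.
Qed.

Lemma take_word m w : take m (word m.+1 w) = word m w.
Proof. by rewrite /word -map_take take_iota (minn_idPl (leqnSn m)). Qed.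

(* distinct points differ at some coordinate (proof irrelevance of the
   admissibility proof) *)
Lemma neq_exists_diff w w' : w <> w' -> exists m, sval w m != sval w' m.
Proof.
move=> ne; apply: contrapT => same; apply: ne.
case: w w' same => [f Hf] [g Hg] /= same.
have fg : f = g.
  apply: funext => m; apply/eqP; apply: contrapT => Hm; apply: same.
  by exists m; apply/negP.
by subst g; congr exist; exact: Prop_irrelevance.
Qed.

Lemma firstdiff_agree w w' k : (k < firstdiff w w')%N -> sval w k = sval w' k.
Proof.
rewrite /firstdiff; case: pselect => [H|_] //.
case: ex_minnP => m _ Hmin km; apply/eqP; apply: contraTT km.
by move/Hmin; rewrite leqNgt.
Qed.

Lemma firstdiff_ge j w w' : w <> w' ->
  (forall k, (k < j)%N -> sval w k = sval w' k) -> (j <= firstdiff w w')%N.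
Proof.
move=> ne E; rewrite /firstdiff; case: pselect => [H|H]; last by case: H; apply: neq_exists_diff.
case: ex_minnP => m Hm _; rewrite leqNgt; apply/negP => mj.
by move: Hm; rewrite (E m mj) eqxx.
Qed.

Lemma var_le_firstdiff phi w w' c : var_le phi (firstdiff w w') c ->
  cabs (phi w - phi w') <= c.
Proof. by move=> H; apply: H => k; apply: firstdiff_agree. Qed.

Definition cyl_rep m (s : seq 'I_N) : option S :=
  match pselect (exists w, word m w = s) with
  | left H => Some (sval (cid H))
  | right _ => None
  end.

Lemma cyl_repP m s r : cyl_rep m s = Some r -> word m r = s.
Proof. by rewrite /cyl_rep; case: pselect => // H [<-]; exact: (svalP (cid H)). Qed.

Lemma cyl_rep_exists m s w : word m w = s -> exists r, cyl_rep m s = Some r.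
Proof.
rewrite /cyl_rep; case: pselect => [H|H] E; first by eexists.
by case: H; exists w.
Qed.

Definition val_at phi (o : option S) : C := if o is Some r then phi r else 0.

(* cylval m phi: the locally constant approximation of phi which, on each
   m-cylinder, takes the value of phi at the chosen point; approx b is the
   approximation of order b - 1 (and 0 for b = 0) *)
Definition cylval m phi w : C := val_at phi (cyl_rep m (word m w)).
Definition approx b phi w : C := if b is b'.+1 then cylval b' phi w else 0.

Definition incr m (s : seq 'I_N) phi : C :=
  match cyl_rep m s with
  | None => 0
  | Some r => phi r - (if m is m'.+1 then val_at phi (cyl_rep m' (take m' s)) else 0)
  end.

Definition cylind m (s : seq 'I_N) w : C := if word m w == s then 1 else 0.

Lemma cylval_rep m phi w : exists r, cylval m phi w = phi r /\ word m r = word m w.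
Proof.
have [r Hr] := cyl_rep_exists (erefl (word m w)).
by exists r; rewrite /cylval Hr; split => //; apply: cyl_repP.
Qed.

Lemma cylval_local m phi w w' : word m w = word m w' -> cylval m phi w = cylval m phi w'.
Proof. by rewrite /cylval => ->. Qed.

Lemma incrD m s phi psi : incr m s (phi \+ psi) = incr m s phi + incr m s psi.
Proof.
rewrite /incr; case: (cyl_rep m s) => [r|]; last by rewrite addr0.
case: m => [|m]; first by rewrite /= !subr0.
by case: (cyl_rep m (take m s)) => [r'|] /=; ring.
Qed.

Lemma incrZ m s (c : C) phi : incr m s (fun w => c * phi w) = c * incr m s phi.
Proof.
rewrite /incr; case: (cyl_rep m s) => [r|]; last by rewrite mulr0.
case: m => [|m]; first by rewrite /= !subr0.
by case: (cyl_rep m (take m s)) => [r'|] /=; ring.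
Qed.

Definition word_tuple m w : m.-tuple 'I_N := Tuple (introT eqP (size_word m w)).

(* one level of the telescoping decomposition: only the cylinder of w
   contributes *)
Lemma cylinder_level m phi w :
  \sum_(t : m.-tuple 'I_N) incr m t phi * cylind m t w = approx m.+1 phi w - approx m phi w.
Proof.
rewrite (bigD1 (word_tuple m w)) //= big1 ?addr0; last first.
  move=> t ne; rewrite /cylind; case: eqP => [E|_]; last by rewrite mulr0.
  by case/eqP: ne; apply: val_inj; rewrite /= E.
rewrite /cylind eqxx mulr1 /incr /cylval.
have [r Hr] := cyl_rep_exists (erefl (word m w)); rewrite Hr.
by case: m r Hr => [|m] r Hr //=; rewrite /cylval take_word.
Qed.

Lemma approx_telescope b phi w :
  \sum_(m < b) (approx m.+1 phi w - approx m phi w) = approx b phi w.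
Proof.
elim: b => [|b IH]; first by rewrite big_ord0.
by rewrite big_ord_recr /= IH; ring.
Qed.

Lemma inV_local phi j :
  (forall w w', word j w = word j w' -> phi w = phi w') -> inV phi.
Proof.
move=> loc eps e0; exists j => m jm w w' E.
rewrite (loc w w') ?subrr ?cabs0 ?exprn_ge0 ?ltW //.
by apply/wordP => k kj; apply: E; apply: leq_trans jm.
Qed.


Lemma var_leD phi psi m a b : var_le phi m a -> var_le psi m b ->
  var_le (phi \+ psi) m (a + b).
Proof.
move=> H1 H2 w w' E.
have -> : (phi \+ psi) w - (phi \+ psi) w' = (phi w - phi w') + (psi w - psi w').
  by rewrite /=; ring.
by apply: le_trans (cabsD _ _) _; apply: lerD; [apply: H1 | apply: H2].
Qed.

Lemma inVD phi psi : inV phi -> inV psi -> inV (phi \+ psi).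
Proof.
move=> Hphi Hpsi eps e0.
have e2 : 0 < eps / 2 by rewrite divr_gt0.
have [M1 H1] := Hphi _ e2; have [M2 H2] := Hpsi _ e2.
exists (maxn (maxn M1 M2) 1) => m; rewrite !geq_max => /andP[/andP[m1 m2] m0].
move=> w w' E; apply: le_trans (var_leD (H1 m m1) (H2 m m2) E) _.
have h2 : 1 <= (2 : R) by lra.
have := scaled_pow_le (ltW e0) h2 m0; set x := (_ / _) ^+ m; lra.
Qed.

Lemma inVZ (c : C) phi : inV phi -> inV (fun w => c * phi w).
Proof.
move=> Hphi eps e0; set k := cabs c + 1.
have k1 : 1 <= k by rewrite lerDr cabs_ge0.
have k0 : 0 < k by apply: lt_le_trans k1; exact: ltr01.
have [M H] := Hphi (eps / k) (divr_gt0 e0 k0).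
exists (maxn M 1) => m; rewrite geq_max => /andP[mM m0] w w' E.
rewrite -mulrBr cabsM.
apply: le_trans (scaled_pow_le (ltW e0) k1 m0).
apply: ler_pM; [exact: cabs_ge0 | exact: cabs_ge0 | | exact: H].
by rewrite lerDl ler01.
Qed.

Lemma inV0 : inV (fun _ : S => 0 : C).
Proof. exact: (@inV_local _ 0). Qed.

(* elements of V are bounded: they are uniformly close to a cylinder
   approximation, which takes finitely many values *)
Lemma inV_bounded phi : inV phi -> exists B, 0 <= B /\ forall w, cabs (phi w) <= B.
Proof.
move=> Hphi; have [M H] := Hphi 1 ltr01.
exists (1 + \sum_(t : M.-tuple 'I_N) cabs (val_at phi (cyl_rep M t))); split.
  by apply: addr_ge0; [exact: ler01 | apply: sumr_ge0 => t _; apply: cabs_ge0].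
move=> w; have [r [Er Pr]] := cylval_rep M phi w.
have -> : phi w = (phi w - phi r) + phi r by ring.
apply: le_trans (cabsD _ _) _; apply: lerD.
  rewrite -(expr1n _ M); apply: (H M (leqnn M)) => k kM.
  by move/wordP: Pr => ->.
rewrite -Er /cylval (bigD1 (word_tuple M w)) //= lerDl.
by apply: sumr_ge0 => t _; apply: cabs_ge0.
Qed.

Definition eval_at w phi : C := phi w.
Definition diff_at (ww : S * S) phi : C := phi ww.1 - phi ww.2.
Definition distinct_pair (ww : S * S) : Prop := ww.1 <> ww.2.
Definition dtheta_pair (t : R) (ww : S * S) : R := dtheta t ww.1 ww.2.

Definition unit_wt w : R := 1.
Lemma unit_wt_gt0 w : 0 < unit_wt w. Proof. exact: ltr01. Qed.
Lemma dtheta_pair_gt0 t : 0 < t -> forall ww, 0 < dtheta_pair t ww.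
Proof. by move=> t0 ww; rewrite /dtheta_pair /dtheta exprn_gt0. Qed.
Lemma eval_atD w phi psi : eval_at w (phi \+ psi) = eval_at w phi + eval_at w psi.
Proof. by []. Qed.
Lemma eval_atZ w (c : C) phi : eval_at w (fun x => c * phi x) = c * eval_at w phi.
Proof. by []. Qed.
Lemma diff_atD ww phi psi : diff_at ww (phi \+ psi) = diff_at ww phi + diff_at ww psi.
Proof. by rewrite /diff_at /=; ring. Qed.
Lemma diff_atZ ww (c : C) phi : diff_at ww (fun x => c * phi x) = c * diff_at ww phi.
Proof. by rewrite /diff_at /=; ring. Qed.

Lemma supnormE phi : supnorm phi = wsup (fun _ => True) eval_at unit_wt phi.
Proof.
rewrite /supnorm /wsup; congr sup; apply/seteqP; split => r /=.
  by case=> w _ <-; exists w; split => //; rewrite /unit_wt divr1.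
by case=> w [_ ->]; exists w => //; rewrite /unit_wt divr1.
Qed.

Lemma lipconstE t phi : lipconst t phi = wsup distinct_pair diff_at (dtheta_pair t) phi.
Proof.
rewrite /lipconst /wsup; congr sup; apply/seteqP; split => r /=.
  by case=> w [w' [ne ->]]; exists (w, w').
by case=> [[w w']] [ne ->]; exists w, w'.
Qed.

Lemma supnorm_set_ub phi : inV phi ->
  has_ubound (wsup_set (fun _ => True) eval_at unit_wt phi).
Proof.
move=> /inV_bounded [B [_ HB]]; exists B => _ [w [_ ->]].
by rewrite /unit_wt divr1; exact: HB.
Qed.

(* [phi]_t is finite: close points are controlled by the variation of phi,
   distant ones by its sup norm *)
Lemma lipconst_set_ub t phi : 0 < t -> t < 1 -> inV phi ->
  has_ubound (wsup_set distinct_pair diff_at (dtheta_pair t) phi).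
Proof.
move=> t0 t1 Hphi; have [B [B0 HB]] := inV_bounded Hphi; have [M HM] := Hphi t t0.
exists (1 + 2 * B / t ^+ M) => _ [[w w']] [/= ne ->].
rewrite /dtheta_pair /dtheta /diff_at /=; set d := firstdiff w w'.
have td : 0 < t ^+ d by rewrite exprn_gt0.
have tM : 0 < t ^+ M by rewrite exprn_gt0.
have [Md|dM] := leqP M d.
  have h0 : 0 <= 2 * B / t ^+ M by rewrite divr_ge0 ?mulr_ge0 ?ler0n // ltW.
  apply: le_trans (_ : 1 <= _); last by lra.
  by rewrite ler_pdivrMr // mul1r; exact: var_le_firstdiff (HM d Md).
apply: le_trans (_ : 2 * B / t ^+ M <= _); last by rewrite lerDr ler01.
apply: le_trans (_ : 2 * B / t ^+ d <= _).
  rewrite ler_pdivrMr // divfK ?gt_eqF //.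
  by apply: le_trans (cabsB _ _) _; rewrite mulr2n mulrDl mul1r; apply: lerD.
rewrite ler_wpM2l ?mulr_ge0 // lef_pV2 ?posrE //.
by apply: ler_wiXn2l; [exact: ltW | exact: ltW | exact: ltnW].
Qed.

Lemma supnorm_ge0 phi : 0 <= supnorm phi.
Proof. by rewrite supnormE; apply: wsup_ge0. Qed.

Lemma lipconst_ge0 t phi : 0 < t -> 0 <= lipconst t phi.
Proof. by move=> t0; rewrite lipconstE; apply: wsup_ge0; exact: dtheta_pair_gt0. Qed.

Lemma normtheta_ge0 t phi : 0 < t -> 0 <= normtheta t phi.
Proof. by move=> t0; rewrite addr_ge0 ?supnorm_ge0 ?lipconst_ge0. Qed.

Lemma supnorm_ge_val phi w : inV phi -> cabs (phi w) <= supnorm phi.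
Proof.
move=> Hphi; have := wsup_bound (i := w) unit_wt_gt0 (supnorm_set_ub Hphi) I.
by rewrite -supnormE /unit_wt mulr1.
Qed.

Lemma lipconst_bound t phi w w' j : 0 < t -> t < 1 -> inV phi ->
  (forall k, (k < j)%N -> sval w k = sval w' k) ->
  cabs (phi w - phi w') <= lipconst t phi * t ^+ j.
Proof.
move=> t0 t1 Hphi E; have [<-|ne] := pselect (w = w').
  by rewrite subrr cabs0 mulr_ge0 ?lipconst_ge0 ?exprn_ge0 ?ltW.
have := wsup_bound (dtheta_pair_gt0 t0) (lipconst_set_ub t0 t1 Hphi) (ne : distinct_pair (w, w')).
rewrite -lipconstE /dtheta_pair /dtheta /diff_at /= => h; apply: le_trans h _.
apply: ler_wpM2l; first exact: lipconst_ge0.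
by apply: ler_wiXn2l; [exact: ltW | exact: ltW | exact: firstdiff_ge].
Qed.

Lemma normtheta_seminorm t : 0 < t -> t < 1 -> @seminormV R _ A (normtheta t).
Proof.
move=> t0 t1; split; first by move=> phi _; exact: normtheta_ge0.
split.
  move=> phi psi Hphi Hpsi; rewrite /normtheta !supnormE !lipconstE.
  have h1 := wsupD unit_wt_gt0 eval_atD (supnorm_set_ub Hphi) (supnorm_set_ub Hpsi).
  have h2 := wsupD (dtheta_pair_gt0 t0) diff_atD (lipconst_set_ub t0 t1 Hphi)
    (lipconst_set_ub t0 t1 Hpsi).
  lra.
move=> c phi Hphi; rewrite /normtheta !supnormE !lipconstE.
rewrite (wsupZ unit_wt_gt0 eval_atZ c (supnorm_set_ub Hphi)).
by rewrite (wsupZ (dtheta_pair_gt0 t0) diff_atZ c (lipconst_set_ub t0 t1 Hphi)); ring.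
Qed.

(* All words are enumerated in one sequence, level by level: the N^m words of
   length m occupy the indices level_start m <= i < level_start m.+1, where
   level_start m = sum_(j < m) N^j; cyl_word i is the i-th word and level i
   its length. *)
Definition level_start m : nat := \sum_(j < m) N ^ j.

Lemma level_startS m : level_start m.+1 = (level_start m + N ^ m)%N.
Proof. by rewrite /level_start big_ord_recr. Qed.

Lemma level_start_mono m m' : (m <= m')%N -> (level_start m <= level_start m')%N.
Proof.
elim: m' => [|m' IH]; first by rewrite leqn0 => /eqP ->.
rewrite leq_eqVlt => /orP[/eqP -> //|]; rewrite ltnS => /IH h.
by rewrite level_startS; apply: leq_trans h (leq_addr _ _).
Qed.

Lemma level_start_ge m : (m <= level_start m)%N.
Proof. by elim: m => // m IH; rewrite level_startS -addn1 leq_add // expn_gt0. Qed.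

Lemma level_ex i : exists m, (i < level_start m.+1)%N.
Proof. by exists i; apply: leq_trans (level_start_ge i.+1). Qed.

Definition level i : nat := ex_minn (level_ex i).

Lemma levelP i : (level_start (level i) <= i < level_start (level i).+1)%N.
Proof.
rewrite /level; case: ex_minnP => m Hm Hmin; rewrite Hm andbT.
case: m Hm Hmin => [|m] Hm Hmin; first by rewrite /level_start big_ord0.
by rewrite leqNgt; apply/negP => /Hmin; rewrite ltnn.
Qed.

Lemma level_eq m i : (level_start m <= i < level_start m.+1)%N -> level i = m.
Proof.
move=> /andP[h1 h2]; have /andP[h3 h4] := levelP i.
have [lt|gt|//] := ltngtP (level i) m.
  by have := leq_trans h4 (level_start_mono lt); rewrite leqNgt ltnS h1.
by have := leq_trans h2 (level_start_mono gt); rewrite leqNgt ltnS h3.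
Qed.

Lemma level_segment b M i : (M <= level_start b.+1)%N ->
  i \in index_iota (level_start b) M -> level i = b.
Proof.
move=> Mb; rewrite mem_index_iota => /andP[i1 i2].
by apply: level_eq; rewrite i1 (leq_trans i2 Mb).
Qed.

Definition enum_tuple m j : m.-tuple 'I_N :=
  nth (nseq_tuple m ord0) (enum {: m.-tuple 'I_N}) j.
Definition cyl_word i : seq 'I_N := tval (enum_tuple (level i) (i - level_start (level i))).

Lemma level_sum (V : nmodType) (F : nat -> seq 'I_N -> V) m :
  \sum_(level_start m <= i < level_start m.+1) F (level i) (cyl_word i) =
  \sum_(t : m.-tuple 'I_N) F m t.
Proof.
rewrite level_startS -{1}(add0n (level_start m)) big_addn addKn.
rewrite (eq_big_nat _ _ (F2 := fun i => F m (tval (enum_tuple m i)))); last first.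
  move=> i /andP[_ hi]; have e : level (i + level_start m) = m.
    by apply: level_eq; rewrite level_startS leq_addl /= addnC ltn_add2l.
  by rewrite /cyl_word e addnK.
by rewrite -big_enum (big_nth (nseq_tuple m ord0)) -cardE card_tuple card_ord.
Qed.

Lemma sum_levels (V : nmodType) (G : nat -> V) b :
  \sum_(i < level_start b) G i = \sum_(m < b) \sum_(level_start m <= i < level_start m.+1) G i.
Proof.
elim: b => [|b IH]; first by rewrite big_ord0 /level_start big_ord0 big_ord0.
rewrite big_ord_recr /= -IH -!(big_mkord xpredT) (@big_cat_nat _ _ _ (level_start b)) //.
exact: level_start_mono.
Qed.

Lemma cylind_le1 m s w : cabs (cylind m s w) <= 1.
Proof. by rewrite /cylind; case: ifP => _; rewrite ?cabs1 // cabs0 ler01. Qed.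

Lemma cylind_diff_le1 m s w w' : cabs (cylind m s w - cylind m s w') <= 1.
Proof.
rewrite /cylind; case: ifP => _; case: ifP => _;
  by rewrite ?subrr ?subr0 ?sub0r ?cabsN ?cabs1 ?cabs0 ?ler01.
Qed.


Section Expansion.
Variables (th th' : R).
Hypotheses (th0 : 0 < th) (th1 : th < 1) (th'0 : 0 < th') (th'1 : th' < 1).
Hypothesis ratio_small : th' / th * N%:R <= 1 / 2.

Definition lam i : C := ((th' / th) ^+ level i)%:C%C.
Definition xfun i phi : C := incr (level i) (cyl_word i) phi / (th' ^+ level i)%:C%C.
Definition yvec i : S -> C := fun w => (th ^+ level i)%:C%C * cylind (level i) (cyl_word i) w.

Lemma term_decomp i phi w :
  lam i * xfun i phi * yvec i w = incr (level i) (cyl_word i) phi * cylind (level i) (cyl_word i) w.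
Proof.
rewrite /lam /xfun /yvec; set m := level i.
have e : ((th' / th) ^+ m)%:C%C * ((th' ^+ m)%:C%C)^-1 * (th ^+ m)%:C%C = 1 :> C.
  rewrite -fmorphV -!rmorphM /=; congr (_%:C%C).
  by rewrite expr_div_n; field; rewrite !expf_neq0 ?lt0r_neq0.
by rewrite -[RHS]mulr1 -e; ring.
Qed.

Lemma partial_sum_levels b phi w :
  \sum_(i < level_start b) lam i * xfun i phi * yvec i w = approx b phi w.
Proof.
under eq_bigr => i _ do rewrite term_decomp.
rewrite (sum_levels (fun i => incr (level i) (cyl_word i) phi * cylind (level i) (cyl_word i) w)).
rewrite -(approx_telescope b phi w); apply: eq_bigr => m _.
by rewrite -cylinder_level (level_sum (fun m s => incr m s phi * cylind m s w)).
Qed.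

Lemma cabs_lam i : cabs (lam i) = (th' / th) ^+ level i.
Proof. by rewrite /lam cabsR ger0_norm // exprn_ge0 // divr_ge0 // ltW. Qed.

Lemma level_lam_le m : \sum_(level_start m <= i < level_start m.+1) cabs (lam i) <= (1 / 2) ^+ m.
Proof.
under eq_big_nat => i _ do rewrite cabs_lam.
rewrite (level_sum (fun m (_ : seq 'I_N) => (th' / th) ^+ m)).
rewrite sumr_const card_tuple card_ord -[_ *+ _]mulr_natl natrX -exprMn mulrC.
apply: lerXn2r; [| | exact: ratio_small]; rewrite nnegrE.
  by rewrite mulr_ge0 ?divr_ge0 ?ltW.
by rewrite divr_ge0.
Qed.


Lemma lam_summable M : \sum_(i < M) cabs (lam i) <= 2.
Proof.
have sub : \sum_(i < M) cabs (lam i) <= \sum_(i < level_start M) cabs (lam i).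
  rewrite (big_ord_widen (level_start M) (fun i => cabs (lam i)) (level_start_ge M)).
  rewrite [X in _ <= X](bigID (fun i : 'I__ => (i < M)%N)) /= lerDl.
  by apply: sumr_ge0 => i _; exact: cabs_ge0.
apply: le_trans sub _; rewrite (sum_levels (fun i => cabs (lam i))); apply: le_trans (geometric_half_le2 R M).
by apply: ler_sum => m _; exact: level_lam_le.
Qed.

(* |D_m(s, phi)| <= ||phi||_theta' theta'^(m-1), hence the bound on xfun *)
Lemma xfun_bound i phi : inV phi -> cabs (xfun i phi) <= normtheta th' phi / th'.
Proof.
move=> Hphi; rewrite /xfun cabs_divR ?exprn_gt0 //; set m := level i; set s := cyl_word i.
have s0 := supnorm_ge0 phi; have l0 := lipconst_ge0 phi th'0.
rewrite /incr; case E: (cyl_rep m s) => [r|]; last by rewrite cabs0 mul0r divr_ge0 ?normtheta_ge0 ?ltW.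
have Pr := cyl_repP E; case: m E Pr => [|m] E Pr.
  rewrite subr0 expr0 divr1; apply: le_trans (supnorm_ge_val r Hphi) _.
  rewrite ler_pdivlMr // /normtheta; apply: le_trans (_ : supnorm phi <= _).
    by rewrite ler_piMr // ltW.
  by rewrite lerDl.
have [r' E'] : exists r', cyl_rep m (take m s) = Some r'.
  by apply: (cyl_rep_exists (w := r)); rewrite -Pr take_word.
have agree : forall k, (k < m)%N -> sval r k = sval r' k.
  by apply/wordP; rewrite (cyl_repP E') -Pr take_word.
rewrite E' /=; apply: le_trans (_ : lipconst th' phi * th' ^+ m / th' ^+ m.+1 <= _).
  by rewrite ler_pM2r ?invr_gt0 ?exprn_gt0 //; exact: lipconst_bound.
have -> : lipconst th' phi * th' ^+ m / th' ^+ m.+1 = lipconst th' phi / th'.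
  by rewrite exprS; field; rewrite expf_neq0 ?lt0r_neq0.
by rewrite ler_pM2r ?invr_gt0 // /normtheta lerDr.
Qed.

Lemma yvec_norm_le2 t i : th <= t -> t < 1 -> normtheta t (yvec i) <= 2.
Proof.
move=> tt t1; have t0 : 0 < t by apply: lt_le_trans tt.
set m := level i; have thm0 : 0 <= th ^+ m by rewrite exprn_ge0 // ltW.
have thm : th ^+ m <= 1 by rewrite exprn_ile1 // ltW.
suff [h1 h2] : supnorm (yvec i) <= 1 /\ lipconst t (yvec i) <= 1 by rewrite /normtheta; lra.
split.
  apply: sup_le_nonneg; first exact: ler01.
  move=> _ [w _ <-]; rewrite /yvec cabsM cabsR ger0_norm //.
  by rewrite -[1]mulr1 ler_pM ?cabs_ge0 // cylind_le1.
apply: sup_le_nonneg; first exact: ler01.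
move=> _ [w [w' [ne ->]]]; rewrite /dtheta; set d := firstdiff w w'.
have td : 0 < t ^+ d by rewrite exprn_gt0.
rewrite ler_pdivrMr // mul1r /yvec -mulrBr cabsM cabsR ger0_norm //.
have [md|dm] := leqP m d.
  have -> : cylind m (cyl_word i) w = cylind m (cyl_word i) w'.
    rewrite /cylind; congr (if _ then _ else _); congr (_ == _).
    by apply/wordP => k km; apply: firstdiff_agree; apply: leq_trans md.
  by rewrite subrr cabs0 mulr0 ltW.
apply: le_trans (_ : th ^+ m * 1 <= _); first by rewrite ler_wpM2l // cylind_diff_le1.
rewrite mulr1; apply: le_trans (_ : t ^+ m <= _); first by apply: lerXn2r; rewrite ?nnegrE // ltW.
by apply: ler_wiXn2l; [exact: ltW | exact: ltW | exact: ltnW].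
Qed.

Lemma remainder_norm_le t j phi (eta : R) M : th <= t -> t < 1 -> 0 < eta -> eta <= 1 ->
  (0 < j)%N -> (M <= j)%N -> (forall m, (M <= m)%N -> var_le phi m ((th * eta) ^+ m)) ->
  normtheta t (fun w => phi w - cylval j phi w) <= 3 * eta.
Proof.
move=> tt t1 e0 e1 j0 Mj HM; have t0 : 0 < t by apply: lt_le_trans tt.
set f := fun w => phi w - cylval j phi w.
have te0 : 0 <= th * eta by rewrite mulr_ge0 // ltW.
have te1 : th * eta <= 1 by rewrite mulr_ile1 // ltW.
have f_small w : cabs (f w) <= (th * eta) ^+ j.
  have [r [Er Pr]] := cylval_rep j phi w; rewrite /f Er.
  by apply: (HM j Mj) => k kj; move/wordP: Pr => ->.
have pow_eta : (th * eta) ^+ j <= eta.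
  by apply: le_trans (pow_le_base te0 te1 j0) _; rewrite ler_piMl // ltW.
have th_le_t k : th ^+ k <= t ^+ k by apply: lerXn2r; rewrite ?nnegrE // ltW.
suff [h1 h2] : supnorm f <= eta /\ lipconst t f <= 2 * eta by rewrite /normtheta; lra.
split.
  apply: sup_le_nonneg; first exact: ltW.
  by move=> _ [w _ <-]; apply: le_trans (f_small w) pow_eta.
apply: sup_le_nonneg; first by rewrite mulr_ge0 // ltW.
move=> _ [w [w' [ne ->]]]; rewrite /dtheta; set d := firstdiff w w'.
have td : 0 < t ^+ d by rewrite exprn_gt0.
rewrite ler_pdivrMr //; have [jd|dj] := leqP j d.
  have -> : f w - f w' = phi w - phi w'.
    rewrite /f (cylval_local phi (w' := w')); first ring.
    by apply/wordP => k kj; apply: firstdiff_agree; apply: leq_trans jd.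
  apply: le_trans (var_le_firstdiff (HM d (leq_trans Mj jd))) _.
  rewrite exprMn; apply: le_trans (_ : t ^+ d * eta <= _).
    apply: ler_pM; [exact: exprn_ge0 (ltW th0) | exact: exprn_ge0 (ltW e0) | exact: th_le_t |].
    by apply: pow_le_base => //; [exact: ltW | exact: leq_trans j0 jd].
  by rewrite mulrC ler_wpM2r ?exprn_ge0 ?ltW //; lra.
apply: le_trans (cabsB _ _) _; apply: le_trans (_ : 2 * (th * eta) ^+ j <= _).
  by have := f_small w; have := f_small w'; lra.
rewrite -mulrA ler_wpM2l ?ler0n // exprMn [eta * _]mulrC.
apply: ler_pM; [exact: exprn_ge0 (ltW th0) | exact: exprn_ge0 (ltW e0) | |
  exact: pow_le_base (ltW e0) e1 j0].
apply: le_trans (th_le_t j) _.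
by apply: ler_wiXn2l; [exact: ltW | exact: ltW | exact: ltnW].
Qed.

End Expansion.

Lemma seminormD (p1 p2 : (S -> C) -> R) : seminormV p1 -> seminormV p2 ->
  seminormV (fun f => p1 f + p2 f).
Proof.
move=> [a1 [b1 c1]] [a2 [b2 c2]]; split; first by move=> f Hf; rewrite addr_ge0 ?a1 ?a2.
split; first by move=> f g Hf Hg; have := b1 f g Hf Hg; have := b2 f g Hf Hg; lra.
by move=> c f Hf; rewrite c1 // c2 // mulrDr.
Qed.

Lemma seminorm0 (p : (S -> C) -> R) : seminormV p -> p (fun _ => 0) = 0.
Proof. by move=> [_ [_ pZ]]; have := pZ 0 _ inV0; rewrite cabs0 !mul0r. Qed.

(* the triangle inequality for a finite linear combination of functions
   depending on the first b coordinates (these all lie in V) *)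
Lemma seminorm_sum_local (p : (S -> C) -> R) (c : nat -> C) (g : nat -> S -> C)
    (r : seq nat) b : seminormV p ->
  (forall i, i \in r -> forall w w', word b w = word b w' -> g i w = g i w') ->
  p (fun w => \sum_(i <- r) c i * g i w) <= \sum_(i <- r) cabs (c i) * p (g i).
Proof.
move=> sp; have [_ [pD pZ]] := sp; elim: r => [|a r IH] loc.
  by rewrite big_nil; under eq_fun do rewrite big_nil; rewrite seminorm0.
have loc_r : forall i, i \in r -> forall w w', word b w = word b w' -> g i w = g i w'.
  by move=> i ir; apply: loc; rewrite inE ir orbT.
have ga_V : inV (g a) by apply: (inV_local (j := b)); apply: loc; rewrite inE eqxx.
have sum_r_V : inV (fun w => \sum_(i <- r) c i * g i w).
  apply: (inV_local (j := b)) => w w' E; apply: eq_big_seq => i ir.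
  by rewrite (loc_r i ir w w').
have -> : (fun w => \sum_(i <- a :: r) c i * g i w) =
    (fun w => c a * g a w) \+ (fun w => \sum_(i <- r) c i * g i w).
  by apply: funext => w; rewrite big_cons.
apply: le_trans (pD _ _ (inVZ (c a) ga_V) sum_r_V) _.
by rewrite big_cons pZ //; apply: lerD => //; exact: IH.
Qed.

End Shift.


Lemma min_param (R : realType) (ths : seq R) :
  all (fun t => (0 < t) && (t < 1)) ths ->
  let th := foldr Num.min (1 / 2) ths in
  0 < th /\ th < 1 /\ forall t, t \in ths -> th <= t /\ t < 1.
Proof.
elim: ths => [|a ths IH] /=; first by move=> _; split; [lra | split; [lra |]].
move=> /andP[/andP[a0 a1] /IH [h0 [h1 h2]]]; split; first by rewrite lt_min a0.
split; first by rewrite gt_min h1 orbT.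
move=> t; rewrite inE => /orP[/eqP ->|tin]; first by rewrite ge_min lexx.
by have [h3 h4] := h2 t tin; rewrite ge_min h3 orbT.
Qed.

Section Nuclearity.
Variables (R : realType) (n : nat) (A : 'M[int]_(n.+2)).
Local Notation N := n.+2.
Local Notation S := (Sigma A).
Local Notation C := (R[i]).
Implicit Types phi f : S -> C.
Variables (p : (S -> C) -> R) (ths : seq R) (K : R).
Hypotheses (p_seminorm : seminormV p) (ths_in01 : all (fun t => (0 < t) && (t < 1)) ths)
  (p_dominated : forall phi, inV phi -> p phi <= K * \sum_(t <- ths) normtheta t phi).

Definition th := foldr Num.min (1 / 2) ths.
Definition th' := th / (2 * N%:R).
Definition Kpos := Num.max K 1.
Definition q phi := p phi + normtheta th' phi.

Lemma th_gt0 : 0 < th. Proof. by case: (min_param ths_in01). Qed.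
Lemma th_lt1 : th < 1. Proof. by case: (min_param ths_in01) => _ []. Qed.
Lemma th_le t : t \in ths -> th <= t /\ t < 1.
Proof. by case: (min_param ths_in01) => _ [] _; apply. Qed.

Lemma twoN_gt0 : 0 < 2 * (N%:R : R). Proof. by rewrite mulr_gt0 ?ltr0n. Qed.
Lemma th'_gt0 : 0 < th'. Proof. by rewrite divr_gt0 ?th_gt0 ?twoN_gt0. Qed.
Lemma th'_lt1 : th' < 1.
Proof.
apply: le_lt_trans th_lt1; rewrite ler_pdivrMr ?twoN_gt0 // ler_peMr ?(ltW th_gt0) //.
have : 1 <= (N%:R : R) by rewrite ler1n.
lra.
Qed.

Lemma ratio_small : th' / th * N%:R <= 1 / 2.
Proof.
rewrite le_eqVlt; apply/orP; left; apply/eqP; rewrite /th'.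
field; apply/andP; split; first exact: lt0r_neq0 th_gt0.
by apply: lt0r_neq0; have := ler0n R n; lra.
Qed.

Lemma Kpos_ge1 : 1 <= Kpos. Proof. by rewrite le_max lexx orbT. Qed.
Lemma Kpos_ge0 : 0 <= Kpos. Proof. exact: le_trans ler01 Kpos_ge1. Qed.

Lemma sum_normtheta_ge0 phi : 0 <= \sum_(t <- ths) normtheta t phi.
Proof.
rewrite big_seq; apply: sumr_ge0 => t tin; apply: normtheta_ge0.
by move/allP: ths_in01 => /(_ t tin) /andP[].
Qed.

Lemma p_le_of_norms f c : inV f -> (forall t, t \in ths -> normtheta t f <= c) ->
  p f <= Kpos * \sum_(t <- ths) c.
Proof.
move=> Hf Hc; apply: le_trans (p_dominated Hf) _.
apply: le_trans (_ : Kpos * \sum_(t <- ths) normtheta t f <= _).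
  by rewrite ler_wpM2r ?sum_normtheta_ge0 // le_max lexx.
rewrite ler_wpM2l ?Kpos_ge0 // [X in _ <= X]big_seq [X in X <= _]big_seq.
by apply: ler_sum => t tin; apply: Hc.
Qed.

Lemma q_continuous : continuous_seminorm q.
Proof.
split; first exact: seminormD p_seminorm (normtheta_seminorm A th'_gt0 th'_lt1).
exists (th' :: ths), Kpos; split; first by rewrite /= th'_gt0 th'_lt1.
move=> phi Hphi; rewrite big_cons /q mulrDr.
have := p_dominated Hphi; have := sum_normtheta_ge0 phi.
have := normtheta_ge0 phi th'_gt0; have := Kpos_ge1.
have KK : K <= Kpos by rewrite le_max lexx.
set a := normtheta th' phi; set s := \sum_(t <- ths) _; move: KK; set k := Kpos.
move=> KK k1 a0 s0 h.
have : K * s <= k * s by rewrite ler_wpM2r.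
have : a <= k * a by rewrite ler_peMl.
lra.
Qed.

Lemma p_le_q phi : p phi <= q phi.
Proof. by rewrite lerDl normtheta_ge0 // th'_gt0. Qed.

Lemma q_ge0 phi : inV phi -> 0 <= q phi.
Proof. by case: p_seminorm => p0 _ Hphi; rewrite addr_ge0 ?p0 ?normtheta_ge0 ?th'_gt0. Qed.

Local Notation lam := (lam n th th').
Local Notation xfun := (@xfun R n A th').
Local Notation yvec := (@yvec R n A th).

Lemma yvec_local i w w' : word (level n i) w = word (level n i) w' -> yvec i w = yvec i w'.
Proof. by rewrite /yvec /cylind => ->. Qed.

Lemma yvec_inV i : inV (yvec i).
Proof. exact: (inV_local (@yvec_local i)). Qed.

Definition ybound : R := Kpos * \sum_(t <- ths) (2 : R).

Lemma ybound_ge0 : 0 <= ybound.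
Proof. by rewrite mulr_ge0 ?Kpos_ge0 // sumr_ge0 // => t _; rewrite ler0n. Qed.

Lemma p_yvec_le i : p (yvec i) <= ybound.
Proof.
apply: p_le_of_norms (yvec_inV i) _ => t tin; have [h1 h2] := th_le tin.
exact: (yvec_norm_le2 A th_gt0 th_lt1 i h1 h2).
Qed.

Lemma xfun_le_q i phi : inV phi -> cabs (xfun i phi) <= q phi / th'.
Proof.
move=> Hphi; apply: le_trans (xfun_bound th'_gt0 th'_lt1 i Hphi) _.
by rewrite ler_pM2r ?invr_gt0 ?th'_gt0 // lerDr; case: p_seminorm => p0 _; exact: p0.
Qed.

Definition weight phi : R := q phi / th' * ybound.

Lemma weight_ge0 phi : inV phi -> 0 <= weight phi.
Proof.
move=> Hphi; apply: mulr_ge0 ybound_ge0; apply: mulr_ge0 (q_ge0 Hphi) _.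
by rewrite invr_ge0 ltW ?th'_gt0.
Qed.

Lemma cylval_remainder_inV phi j : inV phi -> inV (fun w => phi w - cylval j phi w).
Proof.
move=> Hphi; have -> : (fun w => phi w - cylval j phi w) =
    phi \+ (fun w => (-1) * cylval j phi w) by apply: funext => w /=; ring.
by apply: inVD Hphi (inVZ _ (inV_local (@cylval_local _ _ _ j phi))).
Qed.

(* the cylinder approximations of phi converge to phi in p, by the
   super-exponential decay of var_m(phi) *)
Lemma cylval_converges phi : inV phi -> forall eps, 0 < eps ->
  exists J, forall j, (J <= j)%N -> p (fun w => phi w - cylval j phi w) <= eps.
Proof.
move=> Hphi eps e0; set Z := Kpos * \sum_(t <- ths) (1 : R).
have Z0 : 0 <= Z by rewrite mulr_ge0 ?Kpos_ge0 // big_seq sumr_ge0 // => t _; exact: ler01.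
set eta := Num.min 1 (eps / (3 * (Z + 1))).
have eta0 : 0 < eta by rewrite lt_min ltr01 divr_gt0 // mulr_gt0 //; lra.
have eta1 : eta <= 1 by rewrite ge_min lexx.
have etaZ : 3 * eta * Z <= eps.
  have : eta * (3 * (Z + 1)) <= eps.
    by rewrite -ler_pdivlMr ?ge_min ?lexx ?orbT // mulr_gt0 //; lra.
  by have := ltW eta0; nra.
have [J HJ] := Hphi (th * eta) (mulr_gt0 th_gt0 eta0).
exists J.+1 => j Jj; have j_gt0 : (0 < j)%N by apply: leq_trans Jj.
apply: le_trans (p_le_of_norms (c := 3 * eta) (cylval_remainder_inV j Hphi) _) _.
  move=> t tin; have [h1 h2] := th_le tin.
  exact: (remainder_norm_le th_gt0 th_lt1 h1 h2 eta0 eta1 j_gt0 (ltnW Jj) HJ).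
have -> : \sum_(t <- ths) (3 * eta) = 3 * eta * \sum_(t <- ths) (1 : R).
  by rewrite mulr_sumr; apply: eq_bigr => t _; rewrite mulr1.
by rewrite mulrCA.
Qed.

Lemma partial_sum_split phi j M : (level_start n j.+1 <= M)%N ->
  (fun w => phi w - \sum_(i < M) lam i * xfun i phi * yvec i w) =
  (fun w => phi w - cylval j phi w) \+
  (fun w => (-1) * \sum_(level_start n j.+1 <= i < M) lam i * xfun i phi * yvec i w).
Proof.
move=> jM; apply: funext => w /=.
rewrite -(big_mkord xpredT (fun i => lam i * xfun i phi * yvec i w)).
rewrite (@big_cat_nat _ _ _ (level_start n j.+1)) //= big_mkord.
by rewrite (partial_sum_levels th_gt0 th'_gt0) /=; ring.
Qed.

Lemma level_segment_le phi b M : inV phi ->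
  (level_start n b <= M)%N -> (M <= level_start n b.+1)%N ->
  p (fun w => \sum_(level_start n b <= i < M) lam i * xfun i phi * yvec i w) <=
  (1 / 2) ^+ b * weight phi.
Proof.
move=> Hphi bM Mb; have [p0 _] := p_seminorm.
apply: le_trans (@seminorm_sum_local R n A p _ _ _ b p_seminorm _) _.
  by move=> i /(level_segment Mb) <-; exact: yvec_local.
apply: le_trans (_ : \sum_(level_start n b <= i < M) cabs (lam i) * weight phi <= _).
  apply: ler_sum => i _; rewrite cabsM -mulrA ler_wpM2l ?cabs_ge0 //.
  apply: ler_pM; [exact: cabs_ge0 | exact: p0 (yvec_inV i) | exact: xfun_le_q | exact: p_yvec_le].
rewrite -mulr_suml ler_wpM2r ?weight_ge0 //; apply: le_trans (level_lam_le th_gt0 th'_gt0 ratio_small b).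
rewrite [X in _ <= X](@big_cat_nat _ _ _ M) //= lerDl.
by rewrite big_seq sumr_ge0 // => i _; exact: cabs_ge0.
Qed.

Lemma partial_sums_converge phi : inV phi -> forall eps, 0 < eps ->
  exists M0, forall M, (M0 <= M)%N ->
    p (fun w => phi w - \sum_(i < M) lam i * xfun i phi * yvec i w) <= eps.
Proof.
move=> Hphi eps e0; have [_ [pD pZ]] := p_seminorm.
have [J HJ] := cylval_converges Hphi (divr_gt0 e0 (ltr0Sn _ 1)).
set W := weight phi; have W0 : 0 <= W by exact: weight_ge0.
have [b0 Hb0] := half_pow_small (divr_gt0 e0 (mulr_gt0 (ltr0Sn _ 1) (ltr_pwDr ltr01 W0))).
exists (level_start n (maxn J.+1 b0)) => M MM0.
have /andP[Mlo Mhi] := levelP n M; set b := level n M in Mlo Mhi.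
have : (maxn J.+1 b0 <= b)%N.
  rewrite leqNgt; apply/negP => bJ; move: (leq_trans Mhi (level_start_mono n bJ)).
  by rewrite ltnNge MM0.
rewrite geq_max; case: b Mlo Mhi => // j Mlo Mhi /andP[Jj b0j].
have tail_small : (1 / 2 : R) ^+ j.+1 * W <= eps / 2.
  apply: le_trans (_ : eps / (2 * (W + 1)) * W <= _).
    rewrite ler_wpM2r //; apply: le_trans Hb0.
    by apply: ler_wiXn2l => //; lra.
  have W1 : 0 < W + 1 by lra.
  have -> : eps / (2 * (W + 1)) * W = eps / 2 * (W / (W + 1)).
    by field; exact: lt0r_neq0.
  by rewrite ler_piMr ?divr_ge0 ?(ltW e0) // ler_pdivrMr // mul1r; lra.
have tail_V : inV (fun w =>
    \sum_(level_start n j.+1 <= i < M) lam i * xfun i phi * yvec i w).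
  apply: (inV_local (j := j.+1)) => w w' E; apply: eq_big_seq => i.
  by move/(level_segment (ltnW Mhi)) => li; rewrite (yvec_local (w' := w')) // li.
rewrite (partial_sum_split phi Mlo).
apply: le_trans (pD _ _ (cylval_remainder_inV j Hphi) (inVZ _ tail_V)) _.
rewrite pZ // cabsN cabs1 mul1r.
have := HJ j Jj; have := level_segment_le Hphi Mlo (ltnW Mhi); rewrite -/W.
lra.
Qed.

(* the natural map from hat V_q to hat V_p is nuclear, with the constant
   sequences y i k := yvec i representing the vectors of hat V_p *)
Lemma q_nuclear : nuclear_natural_map q p.
Proof.
exists lam, xfun, (fun i _ => yvec i).
split; first by exists 2 => M; exact: lam_summable th_gt0 th'_gt0 ratio_small M.
split.
  move=> i; split; first by move=> phi psi _ _; rewrite /xfun incrD mulrDl.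
  by move=> c phi _; rewrite /xfun incrZ mulrA.
split; first by exists th'^-1 => i phi Hphi; rewrite mulrC; exact: xfun_le_q.
split; first by move=> i _; exact: yvec_inV.
split.
  move=> i eps e0; exists 0%N => k l _ _.
  have -> : yvec i \- yvec i = (fun _ => 0) by apply: funext => w; rewrite /= subrr.
  by rewrite seminorm0 // ltW.
split; first by exists ybound => i; exists 0%N => k _; exact: p_yvec_le.
move=> phi Hphi eps e0; have [M0 HM0] := partial_sums_converge Hphi e0.
by exists M0 => M MM0; exists 0%N => k _; exact: HM0.
Qed.

End Nuclearity.

Theorem theoremB1 (R : realType) (n : nat) (A : 'M[int]_(n.+2)) :
  zero_one A -> aperiodic A -> V_nuclear R A.
Proof.
move=> _ _ p [p_seminorm [ths [K [ths_in01 p_dominated]]]].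
exists (q p ths); split; first exact: q_continuous p_seminorm ths_in01 p_dominated.
by split; [move=> phi _; exact: p_le_q | exact: q_nuclear p_seminorm ths_in01 p_dominated].
Qed.
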